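(* LFI3 is a sublogic of LFI1: for every set of formulas $\Gamma$ and formula $\alpha$, if $\Gamma\vDash_{LFI3}\alpha$ then $\Gamma\vDash_{LFI1}\alpha$.
   Context: Formulas are built from a countable set of propositional variables using unary $\neg,\circ$ and binary $\land,\lor,\to$. On $\{0,1\}$ use Boolean $\land,\lor,\to,\sim$. Let $\mathbb{B}=\{x\in\{0,1\}^3: x_1\lor x_2=1,\ x_3\lor\sim(x_1\land x_2)=1\}=\{T,t,b,f,F\}$ with $T=(1,0,0)$, $t=(1,0,1)$, $b=(1,1,1)$, $f=(0,1,1)$, $F=(0,1,0)$. The LFI3 algebra on $\mathbb{B}$ has operations: $a\dot\land b=(a_1\land b_1,\ a_2\lor b_2,\ (\sim a_2\land b_3)\lor(a_3\land\sim b_2)\lor(a_3\land b_3))$; $a\dot\lor b=(a_1\lor b_1,\ a_2\land b_2,\ (\sim a_1\land b_3)\lor(a_3\land\sim b_1)\lor(a_3\land b_3))$; $a\dot\to b=(a_1\to b_1,\ b_2\land(\sim a_2\lor a_3),\ (\sim a_2\land b_3)\lor(\sim a_2\land a_3\land\sim b_1)\lor(a_3\land b_3)\lor(\sim a_1\land a_3\land\sim b_1))$; $\dot\neg a=(a_2,a_1,a_3)$; $\dot\circ a=(\sim(a_1\land a_2),a_3,a_3\land\sim(a_1\land a_2))$. Designated set $D=\{T,t,b\}$. $\vDash_{LFI3}$ is the consequence relation of this matrix (valuations are homomorphisms; $\Gamma\vDash\alpha$ iff every valuation designating all of $\Gamma$ designates $\alpha$). LFI1 is the three-valued matrix logic on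 $\{1,\frac12,0\}$ with designated set $\{1,\frac12\}$, $\land=\min$, $\lor=\max$ (order $0<\frac12<1$), $a\to c=1$ if $a=0$ and $a\to c=c$ otherwise, $\neg1=0$, $\neg\frac12=\frac12$, $\neg0=1$, $\circ1=\circ0=1$, $\circ\frac12=0$; $\vDash_{LFI1}$ is its matrix consequence relation. *)

From Stdlib Require Import Bool.

Inductive form : Type :=
| Var : nat -> form
| Neg : form -> form
| Circ : form -> form
| And : form -> form -> form
| Or : form -> form -> form
| Imp : form -> form -> form.

Definition trip := (bool * bool * bool)%type.
Definition p1 (a : trip) : bool := fst (fst a).
Definition p2 (a : trip) : bool := snd (fst a).
Definition p3 (a : trip) : bool := snd a.
Definition bimp (x y : bool) : bool := implb x y.

Definition inB (x : trip) : Prop :=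
  (p1 x || p2 x) = true /\ (p3 x || negb (p1 x && p2 x)) = true.

Definition T3 : trip := (true, false, false).
Definition t3 : trip := (true, false, true).
Definition b3 : trip := (true, true, true).
Definition f3 : trip := (false, true, true).
Definition F3 : trip := (false, true, false).

Definition and3 (a b : trip) : trip :=
  (p1 a && p1 b, p2 a || p2 b,
   (negb (p2 a) && p3 b) || (p3 a && negb (p2 b)) || (p3 a && p3 b)).
Definition or3 (a b : trip) : trip :=
  (p1 a || p1 b, p2 a && p2 b,
   (negb (p1 a) && p3 b) || (p3 a && negb (p1 b)) || (p3 a && p3 b)).
Definition imp3 (a b : trip) : trip :=
  (bimp (p1 a) (p1 b), p2 b && (negb (p2 a) || p3 a),
   (negb (p2 a) && p3 b) || (negb (p2 a) && p3 a && negb (p1 b))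
   || (p3 a && p3 b) || (negb (p1 a) && p3 a && negb (p1 b))).
Definition neg3 (a : trip) : trip := (p2 a, p1 a, p3 a).
Definition circ3 (a : trip) : trip :=
  (negb (p1 a && p2 a), p3 a, p3 a && negb (p1 a && p2 a)).

Fixpoint eval3 (p : nat -> trip) (phi : form) : trip :=
  match phi with
  | Var n => p n
  | Neg a => neg3 (eval3 p a)
  | Circ a => circ3 (eval3 p a)
  | And a b => and3 (eval3 p a) (eval3 p b)
  | Or a b => or3 (eval3 p a) (eval3 p b)
  | Imp a b => imp3 (eval3 p a) (eval3 p b)
  end.

Definition designated3 (x : trip) : Prop := x = T3 \/ x = t3 \/ x = b3.

(* Valuations are homomorphisms form -> B; these are exactly eval3 p for
   assignments p of variables into B. *)
Definition conseq_LFI3 (Gamma : form -> Prop) (alpha : form) : Prop :=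
  forall p : nat -> trip, (forall n, inB (p n)) ->
    (forall g, Gamma g -> designated3 (eval3 p g)) ->
    designated3 (eval3 p alpha).

Inductive V1 : Type := one | half | zero.

Definition rank1 (x : V1) : nat := match x with zero => 0 | half => 1 | one => 2 end.
Definition min1 (x y : V1) : V1 := if Nat.leb (rank1 x) (rank1 y) then x else y.
Definition max1 (x y : V1) : V1 := if Nat.leb (rank1 x) (rank1 y) then y else x.
Definition imp1 (x y : V1) : V1 := match x with zero => one | _ => y end.
Definition neg1 (x : V1) : V1 := match x with one => zero | half => half | zero => one end.
Definition circ1 (x : V1) : V1 := match x with half => zero | _ => one end.

Fixpoint eval1 (p : nat -> V1) (phi : form) : V1 :=
  match phi with
  | Var n => p n
  | Neg a => neg1 (eval1 p a)
  | Circ a => circ1 (eval1 p a)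
  | And a b => min1 (eval1 p a) (eval1 p b)
  | Or a b => max1 (eval1 p a) (eval1 p b)
  | Imp a b => imp1 (eval1 p a) (eval1 p b)
  end.

Definition designated1 (x : V1) : Prop := x = one \/ x = half.

Definition conseq_LFI1 (Gamma : form -> Prop) (alpha : form) : Prop :=
  forall p : nat -> V1,
    (forall g, Gamma g -> designated1 (eval1 p g)) ->
    designated1 (eval1 p alpha).

(* The LFI1 matrix is isomorphic to the submatrix of LFI3 on {T, b, F}: the
   embedding 1 |-> T, 1/2 |-> b, 0 |-> F commutes with every connective and
   both preserves and reflects designation. Hence every LFI1 valuation is,
   through the embedding, an LFI3 valuation with the same designated
   formulas, so an LFI1 countermodel is an LFI3 countermodel. *)

Definition trip_of_V1 (x : V1) : trip :=
  match x with one => T3 | half => b3 | zero => F3 end.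

Lemma inB_trip_of_V1 (x : V1) : inB (trip_of_V1 x).
Proof. destruct x; split; reflexivity. Qed.

Lemma neg3_trip_of_V1 (x : V1) : neg3 (trip_of_V1 x) = trip_of_V1 (neg1 x).
Proof. destruct x; reflexivity. Qed.

Lemma circ3_trip_of_V1 (x : V1) : circ3 (trip_of_V1 x) = trip_of_V1 (circ1 x).
Proof. destruct x; reflexivity. Qed.

Lemma and3_trip_of_V1 (x y : V1) :
  and3 (trip_of_V1 x) (trip_of_V1 y) = trip_of_V1 (min1 x y).
Proof. destruct x, y; reflexivity. Qed.

Lemma or3_trip_of_V1 (x y : V1) :
  or3 (trip_of_V1 x) (trip_of_V1 y) = trip_of_V1 (max1 x y).
Proof. destruct x, y; reflexivity. Qed.

Lemma imp3_trip_of_V1 (x y : V1) :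
  imp3 (trip_of_V1 x) (trip_of_V1 y) = trip_of_V1 (imp1 x y).
Proof. destruct x, y; reflexivity. Qed.

Lemma eval3_trip_of_V1 (p : nat -> V1) (phi : form) :
  eval3 (fun n => trip_of_V1 (p n)) phi = trip_of_V1 (eval1 p phi).
Proof.
  induction phi as [n | a IHa | a IHa | a IHa b IHb | a IHa b IHb | a IHa b IHb];
    simpl; try rewrite IHa; try rewrite IHb.
  - reflexivity.
  - apply neg3_trip_of_V1.
  - apply circ3_trip_of_V1.
  - apply and3_trip_of_V1.
  - apply or3_trip_of_V1.
  - apply imp3_trip_of_V1.
Qed.

Lemma designated3_trip_of_V1 (x : V1) :
  designated3 (trip_of_V1 x) <-> designated1 x.
Proof.
  unfold designated3, designated1.
  destruct x; simpl; intuition discriminate.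
Qed.

Lemma designated3_eval3_trip_of_V1 (p : nat -> V1) (phi : form) :
  designated3 (eval3 (fun n => trip_of_V1 (p n)) phi) <-> designated1 (eval1 p phi).
Proof. rewrite eval3_trip_of_V1. apply designated3_trip_of_V1. Qed.

Theorem theorem13 : forall (Gamma : form -> Prop) (alpha : form),
  conseq_LFI3 Gamma alpha -> conseq_LFI1 Gamma alpha.
Proof.
  intros Gamma alpha H3 p HGamma.
  apply designated3_eval3_trip_of_V1.
  apply H3.
  - intro n. apply inB_trip_of_V1.
  - intros g Hg. apply designated3_eval3_trip_of_V1, HGamma, Hg.
Qed.
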